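(* Let $k\ge2$ be a constant integer. There is a constant $C>0$ such that, with probability $1-o(1)$ as $n\to\infty$, the random $k$-tree $G(n)$ has the following property: for every path $u_hu_{h-1}\cdots u_0$ in $G(n)$ such that $u_i$ is born strictly later than $u_{i-1}$ for all $1\le i\le h$, we have $h\le C\log n$.
   Context: Random $k$-tree process: $G(0)$ is a clique on $k$ vertices (its vertices are born in round $0$); for $t\ge1$, $G(t)$ is obtained from $G(t-1)$ by choosing a $k$-clique of $G(t-1)$ uniformly at random, creating a new vertex (born in round $t$), and joining it to all vertices of the chosen clique. *)

From mathcomp Require Import all_boot.
From Stdlib Require Import Reals ClassicalEpsilon.

Set Implicit Arguments.
Unset Strict Implicit.
Unset Printing Implicit Defensive.

(* The initial k-clique has vertices 0..k-1
   (born in round 0); the vertex created in round t (t >= 1) is k + t - 1.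
   A history h : seq (seq nat) records the chosen k-clique of each round:
   nth [::] h t is the clique chosen in round t+1, to which vertex k + t is
   joined.  G(h) has vertex set {0, ..., k + size h - 1}. *)

Definition adj (k : nat) (h : seq (seq nat)) (x y : nat) : bool :=
  [|| [&& x < k, y < k & x != y],
      has (fun t => (y == k + t) && (x \in nth [::] h t)) (iota 0 (size h))
    | has (fun t => (x == k + t) && (y \in nth [::] h t)) (iota 0 (size h))].

Fixpoint subsk (m : nat) (s : seq nat) : seq (seq nat) :=
  match m, s with
  | 0, _ => [:: [::]]
  | m'.+1, [::] => [::]
  | m'.+1, x :: s' => map (cons x) (subsk m' s') ++ subsk m s'
  end.

Definition is_clique (k : nat) (h : seq (seq nat)) (c : seq nat) : bool :=
  all (fun x => all (fun y => (x == y) || adj k h x y) c) c.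

Definition kcliques (k : nat) (h : seq (seq nat)) : seq (seq nat) :=
  [seq c <- subsk k (iota 0 (k + size h)) | is_clique k h c].

(* distribution of the history after n rounds: list of (history, probability);
   each round picks a k-clique of the current graph uniformly at random *)
Fixpoint ktree_dist (k n : nat) : seq (seq (seq nat) * R) :=
  match n with
  | 0 => [:: ([::], 1%R)]
  | n'.+1 =>
      flatten [seq [seq (rcons hw.1 c, (hw.2 / INR (size (kcliques k hw.1)))%R)
                   | c <- kcliques k hw.1] | hw <- ktree_dist k n']
  end.

Definition indic (P : Prop) : R :=
  if excluded_middle_informative P then 1%R else 0%R.

Definition ktree_prob (k n : nat) (P : seq (seq nat) -> Prop) : R :=
  foldr (fun hw acc => (hw.2 * indic (P hw.1) + acc)%R) 0%R (ktree_dist k n).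

Definition birth (k v : nat) : nat := if v < k then 0 else v - k + 1.

(* p = [:: u_0; u_1; ...; u_h] is a path u_h u_(h-1) ... u_0 in G(h)
   (distinct vertices of G(h), consecutive ones adjacent) with u_i born
   strictly later than u_(i-1) for all i. *)
Definition birth_increasing_path (k : nat) (h : seq (seq nat)) (p : seq nat) : Prop :=
  [/\ p != [::], uniq p, all (fun v => v < k + size h) p,
      path (adj k h) (head 0 p) (behead p)
    & sorted (fun a b => birth k a < birth k b) p].

(* Give every vertex a depth: the initial vertices have depth 0 and the vertex
   born in a round has depth one more than the deepest vertex of the clique it
   is joined to.  In an edge uv of a birth-increasing path, with u born before
   v, u lies in the clique chosen for v, so depths increase strictly along the
   path and a path with h edges reaches depth h.
   The potential sum_c 2^depth(c) + sum_v 2^depth(v), where c ranges over the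
   k-cliques and depth(c) is the largest depth in c, grows by exactly
   (k+1) 2^(depth(c)+1) when the clique c is chosen, because the new k-cliques
   are the k sets formed by the new vertex and k-1 vertices of c.  As G(n) has
   more than n k-cliques, the expected potential grows by a factor at most
   1 + 2(k+1)/(n+1) per round, so it is O(n^(2k+2)).  A path with more than
   C log n edges, C = (2k+3)/ln 2, forces a potential of at least n^(2k+3),
   which has probability O(1/n) by Markov's inequality. *)

From HB Require Import structures.
From mathcomp Require Import all_boot zify.
From Stdlib Require Import Reals Lra.
From Stdlib Require List.

Set Implicit Arguments.
Unset Strict Implicit.
Unset Printing Implicit Defensive.

Lemma size_subsk j s : size (subsk j s) = 'C(size s, j).
Proof.
elim: s j => [|x s IH] [|j] //=.
by rewrite size_cat size_map !IH binS addnC.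
Qed.

Lemma mem_subsk j s l : l \in subsk j s -> subseq l s && (size l == j).
Proof.
elim: s j l => [|x s IH] [|j] l //=; rewrite ?inE; try by move/eqP->.
rewrite mem_cat => /orP[/mapP[l' /IH /andP[sub_l's size_l'] ->]|/IH /andP[sub_ls ->]].
  by rewrite /= eqxx sub_l's.
by rewrite andbT; apply: subseq_trans sub_ls (subseq_cons s x).
Qed.

Lemma subseq_mem_subsk s l : subseq l s -> l \in subsk (size l) s.
Proof.
elim: s l => [|x s IH] [|y l] //=; rewrite ?inE // mem_cat.
case: ifP => [/eqP-> /IH sub_ls|_ /IH sub_yls]; last by rewrite sub_yls orbT.
by rewrite (map_f (cons x) sub_ls).
Qed.

Lemma subsk0 s : subsk 0 s = [:: [::]].
Proof. by case: s. Qed.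

Lemma perm_subsk_rcons j s x : 0 < j ->
  perm_eq (subsk j (rcons s x)) (subsk j s ++ map (rcons^~ x) (subsk j.-1 s)).
Proof.
case: j => // j _; elim: s j => [|a s IH] [|j] //=.
  by rewrite !subsk0 /= perm_cons; have := IH 0; rewrite subsk0.
rewrite map_cat -catA.
apply: perm_trans (perm_cat (perm_map _ (IH j)) (IH j.+1)) _.
rewrite !map_cat -!catA perm_cat2l perm_catCA perm_cat2l -!map_comp.
by rewrite (@eq_map _ _ (cons a \o rcons^~ x) (rcons^~ x \o cons a)).
Qed.

Lemma filter_subsk (c : seq nat) j s :
  [seq l <- subsk j s | all (mem c) l] = subsk j [seq x <- s | x \in c].
Proof.
elim: s j => [|x s IH] [|j] //=; first by rewrite subsk0.
rewrite filter_cat filter_map IH /=; case: ifP => x_c /=.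
  by congr (_ ++ _); congr map; rewrite -IH; apply: eq_filter => l; rewrite /preim /= x_c.
rewrite (_ : [seq l <- _ | _] = [::]) //.
by apply/eqP; rewrite -[_ == _]negbK -has_filter; apply/hasPn => l _; rewrite /preim /= x_c.
Qed.

Lemma bin_pred n : 0 < n -> 'C(n, n.-1) = n.
Proof. by move=> n_gt0; rewrite -subn1 bin_sub // bin1. Qed.

Section Growth.
Variable k : nat.

Definition wf_history (h : seq (seq nat)) :=
  forall t, t < size h -> all (fun x => x < k + t) (nth [::] h t).

Lemma wf_history_rcons h c :
  wf_history h -> all (fun x => x < k + size h) c -> wf_history (rcons h c).
Proof.
move=> wf_h c_lt t; rewrite size_rcons ltnS leq_eqVlt nth_rcons.
by case/orP=> [/eqP->|t_lt]; rewrite ?ltnn ?eqxx ?t_lt //; apply: wf_h.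
Qed.

Lemma wf_history_rconsK h c :
  wf_history (rcons h c) -> wf_history h /\ all (fun x => x < k + size h) c.
Proof.
move=> wf_hc; split; last by have := wf_hc (size h); rewrite size_rcons nth_rcons ltnn eqxx; apply.
by move=> t t_lt; have := wf_hc t; rewrite size_rcons nth_rcons t_lt; apply; apply: ltnW.
Qed.

Lemma adj_rcons h c x y : adj k (rcons h c) x y =
  [|| adj k h x y, (y == k + size h) && (x \in c) | (x == k + size h) && (y \in c)].
Proof.
rewrite /adj size_rcons -[(size h).+1]addn1 iotaD !has_cat /= add0n !nth_rcons ltnn eqxx !orbF.
have old_rounds (P : nat -> seq nat -> bool) :
    has (fun t => P t (nth [::] (rcons h c) t)) (iota 0 (size h))
  = has (fun t => P t (nth [::] h t)) (iota 0 (size h)).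
  by apply: eq_in_has => t; rewrite mem_iota add0n => /andP[_ t_lt]; rewrite nth_rcons t_lt.
rewrite (old_rounds (fun t l => (y == k + t) && (x \in l))).
rewrite (old_rounds (fun t l => (x == k + t) && (y \in l))).
by case: [&& _, _ & _]; case: has; case: has; case: (_ && _); case: (_ && _).
Qed.

Lemma adj_newest h y : wf_history h -> adj k h (k + size h) y = false.
Proof.
move=> wf_h; rewrite /adj ltnNge leq_addr /=.
apply/norP; split; apply/hasPn => t; rewrite mem_iota add0n => /andP[_ t_lt].
  apply/negP => /andP[_ /(allP (wf_h t t_lt))].
  by rewrite ltn_add2l ltnNge ltnW.
by rewrite eqn_add2l eq_sym (ltn_eqF t_lt).
Qed.

Lemma is_clique_rcons_old h c l : all (fun x => x < k + size h) l ->
  is_clique k (rcons h c) l = is_clique k h l.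
Proof.
move=> /allP l_lt; apply: eq_in_all => x x_l; apply: eq_in_all => y y_l.
by rewrite adj_rcons (ltn_eqF (l_lt _ x_l)) (ltn_eqF (l_lt _ y_l)) !orbF.
Qed.

Lemma is_clique_rcons_new h c l : wf_history h -> is_clique k h c ->
  all (fun x => x < k + size h) l ->
  is_clique k (rcons h c) (rcons l (k + size h)) = all (mem c) l.
Proof.
move=> wf_h /allP c_clique /allP l_lt; set v := k + size h.
apply/allP/allP => [l_clique y y_l | l_c x].
  have v_vl : v \in rcons l v by rewrite mem_rcons mem_head.
  have /allP/(_ y) := l_clique v v_vl.
  rewrite mem_rcons inE y_l orbT adj_rcons adj_newest // eqxx.
  by rewrite eq_sym (ltn_eqF (l_lt _ y_l)) => /(_ isT).
have {}l_c : {subset l <= c} := l_c.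
rewrite mem_rcons inE => x_vl; apply/allP => y; rewrite mem_rcons inE => y_vl.
case/orP: x_vl => [/eqP->|x_l]; case/orP: y_vl => [/eqP->|y_l].
- by rewrite eqxx.
- by rewrite adj_rcons eqxx (l_c _ y_l) !orbT.
- by rewrite adj_rcons eqxx (l_c _ x_l) !orbT.
have /allP/(_ _ (l_c _ y_l)) /orP[->//|adj_xy] := c_clique _ (l_c _ x_l).
by rewrite adj_rcons adj_xy orbT.
Qed.

Lemma mem_kcliques h c : c \in kcliques k h ->
  [/\ subseq c (iota 0 (k + size h)), size c = k & is_clique k h c].
Proof. by rewrite mem_filter => /andP[c_clique /mem_subsk /andP[c_sub /eqP c_size]]. Qed.

Lemma kclique_lt h c : c \in kcliques k h -> all (fun x => x < k + size h) c.
Proof.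
by case/mem_kcliques => c_sub _ _; apply/allP => x /(mem_subseq c_sub); rewrite mem_iota.
Qed.

Lemma subsk_iota_lt j m l : l \in subsk j (iota 0 m) -> all (fun x => x < m) l.
Proof.
by case/mem_subsk/andP => l_sub _; apply/allP => x /(mem_subseq l_sub); rewrite mem_iota.
Qed.

Lemma kcliques_nil_gt0 : 0 < size (kcliques k [::]).
Proof.
rewrite size_filter -has_count; apply/hasP; exists (iota 0 k).
  by have := subseq_mem_subsk (subseq_refl (iota 0 k)); rewrite size_iota addn0.
apply/allP => x; rewrite mem_iota => /andP[_ x_lt]; apply/allP => y.
by rewrite mem_iota /adj x_lt => /andP[_ ->]; case: eqP.
Qed.

Hypothesis k_gt0 : 0 < k.

Lemma perm_kcliques_rcons h c : wf_history h -> c \in kcliques k h ->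
  perm_eq (kcliques k (rcons h c))
          (kcliques k h ++ [seq rcons l (k + size h) | l <- subsk k.-1 c]).
Proof.
move=> wf_h c_kcl; have [c_sub _ c_clique] := mem_kcliques c_kcl.
set v := k + size h.
have -> : kcliques k (rcons h c) =
    [seq l <- subsk k (rcons (iota 0 v) v) | is_clique k (rcons h c) l].
  by rewrite /kcliques size_rcons addnS -addn1 iotaD cats1.
apply: perm_trans (perm_filter _ (perm_subsk_rcons _ _ k_gt0)) _.
rewrite filter_cat filter_map; apply: perm_cat.
  rewrite (eq_in_filter (a2 := is_clique k h)) //.
  by move=> l /subsk_iota_lt; apply: is_clique_rcons_old.
rewrite (eq_in_filter (a2 := all (mem c))); last first.
  by move=> l /subsk_iota_lt l_lt; apply: is_clique_rcons_new.
rewrite filter_subsk.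
by have /(subseq_uniqP (iota_uniq 0 v)) <- := c_sub.
Qed.

Lemma size_kcliques_rcons h c : wf_history h -> c \in kcliques k h ->
  size (kcliques k (rcons h c)) = size (kcliques k h) + k.
Proof.
move=> wf_h c_kcl; have [_ c_size _] := mem_kcliques c_kcl.
rewrite (perm_size (perm_kcliques_rcons wf_h c_kcl)) size_cat size_map size_subsk.
by rewrite c_size bin_pred.
Qed.

End Growth.

Section Depth.
Variable k : nat.

Definition depths (h : seq (seq nat)) : seq nat :=
  foldl (fun d c => rcons d (\max_(u <- c) nth 0 d u).+1) (nseq k 0) h.

Definition depth h v := nth 0 (depths h) v.

Definition clique_depth h (c : seq nat) := \max_(u <- c) depth h u.

Lemma depths_rcons h c : depths (rcons h c) = rcons (depths h) (clique_depth h c).+1.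
Proof. by rewrite /depths foldl_rcons. Qed.

Lemma size_depths h : size (depths h) = k + size h.
Proof.
elim/last_ind: h => [|h c IH]; first by rewrite size_nseq addn0.
by rewrite depths_rcons !size_rcons IH addnS.
Qed.

Lemma depth_rcons h c v : v < k + size h -> depth (rcons h c) v = depth h v.
Proof. by rewrite /depth depths_rcons nth_rcons size_depths => ->. Qed.

Lemma depth_newest h c : depth (rcons h c) (k + size h) = (clique_depth h c).+1.
Proof. by rewrite /depth depths_rcons nth_rcons size_depths ltnn eqxx. Qed.

Lemma clique_depth_rcons h c l : all (fun x => x < k + size h) l ->
  clique_depth (rcons h c) l = clique_depth h l.
Proof.
move=> /allP l_lt; rewrite /clique_depth big_seq [RHS]big_seq.
by apply: eq_bigr => u u_l; rewrite depth_rcons // l_lt.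
Qed.

Lemma clique_depth_sub h l c : {subset l <= c} -> clique_depth h l <= clique_depth h c.
Proof.
move=> l_c; apply/bigmax_leqP_seq => u u_l _.
exact: (@leq_bigmax_seq _ _ xpredT (depth h) _ (l_c _ u_l)).
Qed.

Lemma depth_born h t : wf_history k h -> t < size h ->
  depth h (k + t) = (clique_depth h (nth [::] h t)).+1.
Proof.
elim/last_ind: h t => [|h c IH] t //.
case/wf_history_rconsK=> wf_h c_lt; rewrite size_rcons ltnS leq_eqVlt.
case/orP=> [/eqP->|t_lt]; first by rewrite depth_newest nth_rcons ltnn eqxx clique_depth_rcons.
rewrite depth_rcons ?ltn_add2l // IH // nth_rcons t_lt clique_depth_rcons //.
by apply: sub_all (wf_h t t_lt) => x /leq_trans; apply; rewrite leq_add2l ltnW.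
Qed.

Lemma leq_birth a b : a <= b -> birth k a <= birth k b.
Proof. by rewrite /birth; case: ifP; case: ifP; lia. Qed.

Lemma depth_lt_adj h x y : wf_history k h -> adj k h x y ->
  birth k x < birth k y -> y < k + size h -> depth h x < depth h y.
Proof.
move=> wf_h /or3P[/and3P[x_lt y_lt _]|/hasP[t]|/hasP[t]].
- by rewrite /birth x_lt y_lt.
- rewrite mem_iota add0n => /andP[_ t_lt] /andP[/eqP-> x_ht] _ _.
  by rewrite depth_born // ltnS (@leq_bigmax_seq _ _ xpredT (depth h) _ x_ht).
- rewrite mem_iota add0n => /andP[_ t_lt] /andP[/eqP-> /(allP (wf_h t t_lt))].
  by move/ltnW/leq_birth; rewrite leqNgt => /negbTE->.
Qed.

Lemma depth_path h x q : wf_history k h -> path (adj k h) x q ->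
  path (fun a b => birth k a < birth k b) x q ->
  all (fun v => v < k + size h) q ->
  depth h x + size q <= depth h (last x q).
Proof.
move=> wf_h; elim: q x => [|y q IH] x /=; first by rewrite addn0.
move=> /andP[adj_xy adj_q] /andP[birth_xy birth_q] /andP[y_lt q_lt].
apply: leq_trans (IH y adj_q birth_q q_lt); rewrite addnS -addSn leq_add2r.
exact: depth_lt_adj.
Qed.

End Depth.

Section Potential.
Variable k : nat.

Definition clique_potential h := \sum_(c <- kcliques k h) expn 2 (clique_depth k h c).
Definition vertex_potential h := \sum_(d <- depths k h) expn 2 d.
Definition potential h := clique_potential h + vertex_potential h.

Lemma potential_path h p : wf_history k h -> birth_increasing_path k h p ->
  expn 2 (size p).-1 <= potential h.
Proof.
case: p => [|x q] wf_h [// _ _ xq_lt adj_path birth_path].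
have /andP[_ q_lt] := xq_lt.
have deep_last := depth_path wf_h adj_path birth_path q_lt.
have last_mem : depth k h (last x q) \in depths k h.
  by apply: mem_nth; rewrite size_depths; apply: (allP xq_lt); apply: mem_last.
rewrite /potential /vertex_potential (big_rem _ last_mem) /= addnCA.
apply: leq_trans (leq_addr _ _); rewrite leq_exp2l //.
by apply: leq_trans deep_last; apply: leq_addl.
Qed.

Lemma vertex_potential_rcons h c :
  vertex_potential (rcons h c) = vertex_potential h + expn 2 (clique_depth k h c).+1.
Proof. by rewrite /vertex_potential depths_rcons big_rcons. Qed.

Lemma clique_depth_rcons_newest h c l : all (fun x => x < k + size h) c ->
  {subset l <= c} ->
  clique_depth k (rcons h c) (rcons l (k + size h)) = (clique_depth k h c).+1.
Proof.
move=> /allP c_lt l_c; rewrite /clique_depth big_rcons /= depth_newest.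
rewrite -/(clique_depth k _ l) clique_depth_rcons; last by apply/allP => x /l_c /c_lt.
by apply/maxn_idPr; apply: leqW; apply: clique_depth_sub.
Qed.

Hypothesis k_gt0 : 0 < k.

Lemma clique_potential_rcons h c : wf_history k h -> c \in kcliques k h ->
  clique_potential (rcons h c) = clique_potential h + k * expn 2 (clique_depth k h c).+1.
Proof.
move=> wf_h c_kcl; have [_ c_size _] := mem_kcliques c_kcl.
rewrite /clique_potential (perm_big _ (perm_kcliques_rcons k_gt0 wf_h c_kcl)) big_cat big_map.
congr (_ + _).
  by apply: eq_big_seq => l /kclique_lt l_lt; rewrite clique_depth_rcons.
rewrite (eq_big_seq (fun=> expn 2 (clique_depth k h c).+1)); last first.
  move=> l /mem_subsk/andP[l_sub _].
  by rewrite clique_depth_rcons_newest ?(kclique_lt c_kcl) //; apply: mem_subseq.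
by rewrite big_const_seq count_predT iter_addn_0 size_subsk c_size bin_pred // mulnC.
Qed.

Lemma potential_rcons h c : wf_history k h -> c \in kcliques k h ->
  potential (rcons h c) = potential h + k.+1 * expn 2 (clique_depth k h c).+1.
Proof.
move=> wf_h c_kcl; rewrite /potential clique_potential_rcons // vertex_potential_rcons.
by rewrite mulSn addnACA [k * _ + _]addnC.
Qed.

Lemma sum_potential_rcons h : wf_history k h ->
  \sum_(c <- kcliques k h) potential (rcons h c)
  = size (kcliques k h) * potential h + k.+1 * 2 * clique_potential h.
Proof.
move=> wf_h; rewrite big_seq (eq_bigr _ (fun c => potential_rcons wf_h)) -big_seq.
rewrite big_split big_const_seq count_predT iter_addn_0 mulnC big_distrr.
by congr (_ + _); apply: eq_bigr => c _; rewrite expnS mulnA.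
Qed.

End Potential.

Lemma RplusA : associative Rplus.
Proof. by move=> x y z; rewrite Rplus_assoc. Qed.

HB.instance Definition _ := Monoid.isComLaw.Build R 0%R Rplus RplusA Rplus_comm Rplus_0_l.
HB.instance Definition _ := Monoid.isMulLaw.Build R 0%R Rmult Rmult_0_l Rmult_0_r.
HB.instance Definition _ :=
  Monoid.isAddLaw.Build R Rmult Rplus Rmult_plus_distr_r Rmult_plus_distr_l.

Section RealSums.
Local Open Scope R_scope.

Lemma INR_sum (A : Type) (l : seq A) (F : A -> nat) :
  INR (\sum_(x <- l) F x) = \big[Rplus/0]_(x <- l) INR (F x).
Proof. exact: (big_morph INR plus_INR (erefl (INR 0))). Qed.

Lemma INR_expn m n : INR (expn m n) = INR m ^ n.
Proof. by elim: n => [|n IH]; rewrite ?expnS ?mult_INR ?IH. Qed.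

Lemma ler_sum_In (A : Type) (l : seq A) (F G : A -> R) :
  (forall x, List.In x l -> F x <= G x) ->
  \big[Rplus/0]_(x <- l) F x <= \big[Rplus/0]_(x <- l) G x.
Proof.
elim: l => [|x l IH] FG; rewrite ?big_nil ?big_cons; first lra.
by apply: Rplus_le_compat; [apply: FG; left | apply: IH => y y_l; apply: FG; right].
Qed.

Lemma eq_sum_In (A : Type) (l : seq A) (F G : A -> R) :
  (forall x, List.In x l -> F x = G x) ->
  \big[Rplus/0]_(x <- l) F x = \big[Rplus/0]_(x <- l) G x.
Proof.
elim: l => [|x l IH] FG; rewrite ?big_nil ?big_cons //.
by rewrite FG ?IH //; [move=> y y_l; apply: FG; right | left].
Qed.

Lemma sumR_const (A : Type) (l : seq A) (a : R) :
  \big[Rplus/0]_(x <- l) a = INR (size l) * a.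
Proof.
elim: l => [|x l IH]; first by rewrite big_nil /=; lra.
by rewrite big_cons IH (S_INR (size l)); lra.
Qed.

Lemma In_mem (T : eqType) (x : T) s : List.In x s -> x \in s.
Proof. by elim: s => //= y s IH [->|/IH x_s]; rewrite inE ?eqxx ?x_s ?orbT. Qed.

Lemma markov_sum (A : Type) (l : seq (A * R)) (f : A -> R) (P : A -> Prop) (T : R) :
  \big[Rplus/0]_(x <- l) x.2 = 1 ->
  (forall x, List.In x l -> [/\ 0 <= x.2, 0 <= f x.1 & (~ P x.1 -> T <= f x.1)]) ->
  T * (1 - \big[Rplus/0]_(x <- l) (x.2 * indic (P x.1)))
    <= \big[Rplus/0]_(x <- l) (x.2 * f x.1).
Proof.
move=> mass1 hyp.
suff : T * \big[Rplus/0]_(x <- l) x.2 <=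
    \big[Rplus/0]_(x <- l) (x.2 * f x.1) + T * \big[Rplus/0]_(x <- l) (x.2 * indic (P x.1)).
  by rewrite mass1; lra.
rewrite !big_distrr -big_split; apply: ler_sum_In => x /hyp[w_ge0 f_ge0 notP_large] /=.
rewrite /indic; case: ClassicalEpsilon.excluded_middle_informative => [_|/notP_large T_le] /=; nra.
Qed.

End RealSums.

Section RealBounds.
Local Open Scope R_scope.

Lemma weighted_step_le (w N m P F a : R) :
  0 <= w -> 0 < m <= N -> 0 <= F <= P -> 0 <= a ->
  w / N * (N * P + a * F) <= (1 + a / m) * (w * P).
Proof.
move=> w_ge0 [m_gt0 m_le] [F_ge0 F_le] a_ge0.
have -> : w / N * (N * P + a * F) = w * P + (w * a) * (F / N) by field; lra.
have -> : (1 + a / m) * (w * P) = w * P + (w * a) * (P / m) by field; lra.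
apply/Rplus_le_compat_l/Rmult_le_compat_l; first nra.
apply: Rle_trans (_ : P / N <= P / m).
  by apply: Rmult_le_compat_r; [apply/Rlt_le/Rinv_0_lt_compat; lra|].
by apply/Rmult_le_compat_l/Rinv_le_contravar; lra.
Qed.

Lemma pow_succ_ge (A : nat) (m : R) : 0 < m -> (1 + INR A / m) * m ^ A <= (m + 1) ^ A.
Proof.
move=> m_gt0; have m_pow_gt0 : 0 < m ^ A by apply: pow_lt.
rewrite (_ : m + 1 = m * (1 + / m)); last by field; lra.
rewrite Rpow_mult_distr.
rewrite (_ : (1 + INR A / m) * m ^ A = m ^ A * (1 + INR A * / m)); last by field; lra.
by apply/Rmult_le_compat_l/poly/Rinv_0_lt_compat; lra.
Qed.

Lemma pow_le_pow2 (x : R) (m L : nat) : 0 < x -> INR m / ln 2 * ln x < INR L -> x ^ m <= 2 ^ L.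
Proof.
move=> x_gt0 L_gt; have ln2_gt0 : 0 < ln 2 by have := ln_lt_2; lra.
apply/Rlt_le/ln_lt_inv; try apply: pow_lt; try lra.
rewrite !ln_pow; try lra.
rewrite (_ : INR m * ln x = INR m / ln 2 * ln x * ln 2); last by field; lra.
exact: Rmult_lt_compat_r.
Qed.

Lemma pow_succ_le_eps (K eps x : R) (A : nat) : 0 <= K -> 0 < eps -> 1 <= x ->
  K * 2 ^ A / eps < x -> K * (x + 1) ^ A <= eps * x ^ A.+1.
Proof.
move=> K_ge0 eps_gt0 x_ge1 x_gt; have xA_gt0 : 0 < x ^ A by apply: pow_lt; lra.
have K2A_le : K * 2 ^ A <= eps * x.
  rewrite (_ : K * 2 ^ A = K * 2 ^ A / eps * eps); last by field; lra.
  by rewrite Rmult_comm; apply/Rlt_le/Rmult_lt_compat_l.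
have : (x + 1) ^ A <= 2 ^ A * x ^ A by rewrite -Rpow_mult_distr; apply: pow_incr; lra.
rewrite [x ^ A.+1]/=; nra.
Qed.

End RealBounds.

Section KTreeDistribution.
Local Open Scope R_scope.
Variable k : nat.
Hypothesis k_gt0 : (0 < k)%nat.

Lemma ktree_probE n P :
  ktree_prob k n P = \big[Rplus/0]_(hw <- ktree_dist k n) (hw.2 * indic (P hw.1)).
Proof. by rewrite unlock. Qed.

Lemma sum_ktree_dist_S n (g : seq (seq nat) * R -> R) :
  \big[Rplus/0]_(hw <- ktree_dist k n.+1) g hw =
  \big[Rplus/0]_(hw <- ktree_dist k n) \big[Rplus/0]_(c <- kcliques k hw.1)
     g (rcons hw.1 c, hw.2 / INR (size (kcliques k hw.1))).
Proof. by rewrite /= big_flatten big_map; apply: eq_bigr => hw _; rewrite big_map. Qed.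

Lemma ktree_dist_support n h w : List.In (h, w) (ktree_dist k n) ->
  [/\ size h = n, wf_history k h, 0 <= w & (n < size (kcliques k h))%nat].
Proof.
elim: n h w => [|n IH] h w.
  by case=> [[<- <-]|[]]; split => //; [lra | exact: kcliques_nil_gt0].
case/List.in_concat=> _ [/List.in_map_iff[[h' w'] [<- /IH[size_h' wf_h' w'_ge0 n_lt]]]].
case/List.in_map_iff=> c [[<- <-] /In_mem c_kcl] /=.
have N_gt0 : 0 < INR (size (kcliques k h')) by apply: lt_0_INR; lia.
split.
- by rewrite size_rcons size_h'.
- exact: wf_history_rcons (kclique_lt c_kcl).
- exact: Rle_mult_inv_pos.
- by rewrite size_kcliques_rcons //; lia.
Qed.

Lemma ktree_dist_mass n : \big[Rplus/0]_(hw <- ktree_dist k n) hw.2 = 1.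
Proof.
elim: n => [|n IH]; first by rewrite big_cons big_nil /=; lra.
rewrite sum_ktree_dist_S -IH; apply: eq_sum_In => -[h w] /ktree_dist_support[_ _ _ n_lt] /=.
by rewrite sumR_const; field; apply: not_0_INR; lia.
Qed.

Definition expected_potential n :=
  \big[Rplus/0]_(hw <- ktree_dist k n) (hw.2 * INR (potential k hw.1)).

Lemma expected_potential_S n :
  expected_potential n.+1 <= (1 + INR (k.+1 * 2) / INR n.+1) * expected_potential n.
Proof.
rewrite /expected_potential sum_ktree_dist_S big_distrr.
apply: ler_sum_In => -[h w] /ktree_dist_support[_ wf_h w_ge0 n_lt].
rewrite [(h, w).1]/= [(h, w).2]/= -big_distrr -INR_sum sum_potential_rcons //.
rewrite plus_INR mult_INR (mult_INR (k.+1 * 2)).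
apply: weighted_step_le => //; last exact: pos_INR.
- by split; [apply: lt_0_INR; lia | apply: le_INR; lia].
- by split; [apply: pos_INR | apply: le_INR; rewrite /potential; lia].
Qed.

Lemma expected_potential_le n :
  expected_potential n <= INR (potential k [::]) * (INR n + 1) ^ (k.+1 * 2).
Proof.
elim: n => [|n IH].
  rewrite /expected_potential big_cons big_nil [INR 0]/= Rplus_0_l pow1.
  by rewrite [([::], 1).1]/= [([::], 1).2]/=; lra.
apply: Rle_trans (expected_potential_S n) _.
have n1_gt0 : 0 < INR n.+1 by apply: lt_0_INR; lia.
have factor_ge0 : 0 <= 1 + INR (k.+1 * 2) / INR n.+1.
  by have := Rle_mult_inv_pos _ _ (pos_INR (k.+1 * 2)) n1_gt0; rewrite /Rdiv; lra.
apply: Rle_trans (Rmult_le_compat_l _ _ _ factor_ge0 IH) _.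
have := Rmult_le_compat_l _ _ _ (pos_INR (potential k [::])) (pow_succ_ge (k.+1 * 2) n1_gt0).
rewrite -(S_INR n); lra.
Qed.

Lemma potential_ge_of_long_path h (x : R) (m : nat) : wf_history k h -> 0 < x ->
  ~ (forall p, birth_increasing_path k h p -> INR (size p).-1 <= INR m / ln 2 * ln x) ->
  x ^ m <= INR (potential k h).
Proof.
move=> wf_h x_gt0 long_path; apply: Rnot_lt_le => small_potential.
apply: long_path => p p_path; apply: Rnot_lt_le => p_long.
have := le_INR _ _ (leP (potential_path wf_h p_path)).
rewrite INR_expn (_ : INR 2 = 2); last by simpl; lra.
have := pow_le_pow2 x_gt0 p_long; lra.
Qed.

Lemma ktree_paths_short_whp (eps : R) : 0 < eps ->
  exists N : nat, forall n : nat, (N <= n)%nat ->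
    1 - eps <= ktree_prob k n
      (fun h => forall p : seq nat, birth_increasing_path k h p ->
         INR (size p).-1 <= INR (k.+1 * 2).+1 / ln 2 * ln (INR n)).
Proof.
set A := (k.+1 * 2)%nat; set K := INR (potential k [::]).
move=> eps_gt0; have [N0 N0_lt] := INR_unbounded (K * 2 ^ A / eps).
exists N0.+1 => n n_gt; have n_ge1 : 1 <= INR n by apply: (le_INR 1); lia.
have N0_le : INR N0 <= INR n by apply: le_INR; lia.
set T := INR n ^ A.+1; have T_gt0 : 0 < T by apply: pow_lt; lra.
have E_le : expected_potential n <= eps * T.
  apply: Rle_trans (expected_potential_le n) _.
  by apply: pow_succ_le_eps; [apply: pos_INR | | | apply: Rlt_le_trans N0_le].
set P := (X in ktree_prob k n X); rewrite ktree_probE.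
have : T * (1 - \big[Rplus/0]_(hw <- ktree_dist k n) (hw.2 * indic (P hw.1)))
       <= expected_potential n.
  apply: (markov_sum (f := fun h => INR (potential k h)) (ktree_dist_mass n)).
  move=> -[h w] /ktree_dist_support[_ wf_h w_ge0 _].
  split => //; first exact: pos_INR.
  by apply: potential_ge_of_long_path wf_h _; lra.
nra.
Qed.

End KTreeDistribution.

Theorem proposition5 (k : nat) (hk : (2 <= k)%N) :
  exists C : R, (0 < C)%R /\
    forall eps : R, (0 < eps)%R ->
      exists N : nat, forall n : nat, (N <= n)%N ->
        (1 - eps <= ktree_prob k n
           (fun h => forall p : seq nat, birth_increasing_path k h p ->
              (INR (size p).-1 <= C * ln (INR n))%R))%R.
Proof.
have k_gt0 : 0 < k by apply: leq_trans hk.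
exists (INR (k.+1 * 2).+1 / ln 2)%R; split; last exact: ktree_paths_short_whp.
by apply: Rdiv_lt_0_compat; [apply: lt_0_INR; lia | have := ln_lt_2; lra].
Qed.
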